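(* Let $\mathfrak{A}$ be a $\sigma$-algebra represented as $\mathfrak{A}=\mathfrak{A}(M)/\mathcal{I}$, with $\mathfrak{A}(M)$ a $\sigma$-algebra of subsets of a nonempty set $M$ and $\mathcal{I}$ a $\sigma$-ideal in $\mathfrak{A}(M)$. Up to the canonical homeomorphism between $\mathcal{Q}(\mathfrak{A})$ and the Gelfand spectrum of the abelian $C^\ast$-algebra $\mathcal{F}_{\mathfrak{A}(M)}(M,\mathbb{C})/\mathcal{F}(\mathcal{I})$, the Gelfand transformation of $\mathcal{F}_{\mathfrak{A}(M)}(M,\mathbb{C})/\mathcal{F}(\mathcal{I})$ restricted to its selfadjoint part $\mathcal{F}_{\mathfrak{A}(M)}(M,\mathbb{R})/\mathcal{F}_{\mathbb{R}}(\mathcal{I})$ is the map \[ \Gamma:\mathcal{F}_{\mathfrak{A}(M)}(M,\mathbb{R})/\mathcal{F}_{\mathbb{R}}(\mathcal{I})\to C(\mathcal{Q}(\mathfrak{A}),\mathbb{R}),\qquad [\varphi]\mapsto f_{E^{[\varphi]}}. \] Moreover, if $\mathcal{Q}(\mathfrak{A})$ is identified with $\mathcal{Q}^{\mathcal{I}}(\mathfrak{A}(M))$, then $f_{E^{[\varphi]}}=f_{E^\varphi}|_{\mathcal{Q}^{\mathcal{I}}(\mathfrak{A}(M))}$, where $\varphi\mapsto f_{E^\varphi}$ is the Gelfand transformation on $\mathcal{F}_{\mathfrak{A}(M)}(M,\mathbb{R})$ (via $\mathcal{Q}(\mathfrak{A}(M))\cong\Omega(\mathcal{F}_{\mathfr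ak{A}(M)}(M,\mathbb{C}))$).
   Context: $\mathcal{F}_{\mathfrak{A}(M)}(M,\mathbb{C})$ is the $C^\ast$-algebra of bounded $\mathfrak{A}(M)$-measurable functions $M\to\mathbb{C}$ (sup norm), $\mathcal{F}_{\mathfrak{A}(M)}(M,\mathbb{R})$ its real-valued elements, $\mathcal{F}(\mathcal{I})$ the closed ideal of those functions vanishing outside some $A\in\mathcal{I}$, and $\mathcal{F}_{\mathbb{R}}(\mathcal{I})=\mathcal{F}_{\mathfrak{A}(M)}(M,\mathbb{R})\cap\mathcal{F}(\mathcal{I})$. For a $\sigma$-complete lattice $\mathbb{L}$ (with $0,1$), a spectral family is a map $E:\mathbb{R}\to\mathbb{L}$ with $E_\lambda\le E_\mu$ ($\lambda\le\mu$), $E_\lambda=\bigwedge_{\mu>\lambda}E_\mu$, $\bigwedge_\lambda E_\lambda=0$, $\bigvee_\lambda E_\lambda=1$; quasipoints are maximal dual ideals (maximal nonempty upward closed subsets not containing $0$ and closed under finite meets); the Stone spectrum $\mathcal{Q}(\mathbb{L})$ is the set of quasipoints with the topology generated by $\{\mathfrak{B}\mid a\in\mathfrak{B}\}$, $a\in\mathbb{L}$; for a bounded spectral family $E$, $f_E(\mathfrak{B}):=\inf\{\lambda\mid E_\lambda\in\mathfrak{B}\}$. For $\varphi\in\mathcal{F}_{\mathfrak{A}(M)}(M,\mathbb{R})$, $E^\varphi_\lambda:=\varphi^{-1}(]-\infty,\lambda])$ and $E^{[\varphi]}_\lambda:=[E^\varphi_\lambda]\in\mathfrak{A}$ (class modulo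 $\mathcal{I}$); $E^{[\varphi]}$ depends only on $[\varphi]$ and is a spectral family in $\mathfrak{A}$. With $\mathcal{I}^\perp=\{M\setminus A\mid A\in\mathcal{I}\}$, $\mathcal{Q}^{\mathcal{I}}(\mathfrak{A}(M)):=\{\mathfrak{B}\in\mathcal{Q}(\mathfrak{A}(M))\mid\mathcal{I}^\perp\subseteq\mathfrak{B}\}$, identified with $\mathcal{Q}(\mathfrak{A})$ via $\mathfrak{B}\mapsto\{[A]\mid A\in\mathfrak{B}\}$ (so that $[A]$ lies in the image iff any representative $A$ lies in $\mathfrak{B}$). It is known that $\mathcal{Q}(\mathfrak{A})$ is canonically homeomorphic to the Gelfand spectrum of $\mathcal{F}_{\mathfrak{A}(M)}(M,\mathbb{C})/\mathcal{F}(\mathcal{I})$. *)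

From HB Require Import structures.
From mathcomp Require Import all_boot all_order all_algebra.
From mathcomp Require Import all_classical all_reals all_analysis.
From mathcomp Require Import complex.

Set Implicit Arguments.
Unset Strict Implicit.
Unset Printing Implicit Defensive.

Import Order.TTheory GRing.Theory Num.Theory.
Import numFieldNormedType.Exports.
Local Open Scope classical_set_scope.
Local Open Scope ring_scope.

(* Generic lattice notions: a lattice is given by its carrier Lc (a set
   inside an ambient type L), its order le and its bottom element bot.  *)
Section LatticeNotions.
Variables (L : Type) (Lc : set L) (le : L -> L -> Prop) (bot : L).

Definition is_meet (a b c : L) : Prop :=
  [/\ Lc c, le c a, le c b & forall e, Lc e -> le e a -> le e b -> le e c].

Definition dual_ideal (B : set L) : Prop :=
  [/\ B `<=` Lc, B !=set0,
      (forall a b, B a -> Lc b -> le a b -> B b),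
      ~ B bot &
      (forall a b c, B a -> B b -> is_meet a b c -> B c)].

Definition quasipoint (B : set L) : Prop :=
  dual_ideal B /\ (forall B', dual_ideal B' -> B `<=` B' -> B' = B).

(* Stone topology on the set of quasipoints: generated by the sets
   {B | a \in B}, a in L.  U is open iff every point of U has a finite
   intersection of generating sets around it contained in U. *)
Definition stone_open (U : set (set L)) : Prop :=
  U `<=` quasipoint /\
  forall B, U B -> exists (n : nat) (a : nat -> L),
    (forall i, (i < n)%N -> B (a i)) /\
    (forall B', quasipoint B' -> (forall i, (i < n)%N -> B' (a i)) -> U B').

Definition stone_continuous {R : realType} (f : set L -> R) : Prop :=
  forall V : set R, open V -> stone_open [set B | quasipoint B /\ V (f B)].

Definition fE {R : realType} (E : R -> L) (B : set L) : R :=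
  inf [set l : R | B (E l)].

End LatticeNotions.

Section Setting.
Context (R : realType) (d : measure_display) (M : measurableType d).

Definition sigma_ideal (I : set (set M)) : Prop :=
  [/\ I `<=` measurable, I set0,
      (forall A B, I B -> measurable A -> A `<=` B -> I A) &
      (forall F : nat -> set M, (forall n, I (F n)) -> I (\bigcup_n F n))].

Definition bmeasR (phi : M -> R) : Prop :=
  measurable_fun setT phi /\ exists k : R, forall x, `|phi x| <= k.

Definition bmeasC (f : M -> R[i]) : Prop :=
  bmeasR (fun x => complex.Re (f x)) /\ bmeasR (fun x => complex.Im (f x)).

Definition FI (I : set (set M)) (f : M -> R[i]) : Prop :=
  bmeasC f /\ exists A, I A /\ forall x, ~ A x -> f x = 0.

(* a character (element of the Gelfand spectrum) of the quotient
   C*-algebra F(M,C)/F(I), represented (as usual) by a nonzero multiplicative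
   linear functional on F(M,C) that vanishes on F(I).  tau is only
   meaningful on bounded measurable functions. *)
Definition quotient_character (I : set (set M)) (tau : (M -> R[i]) -> R[i])
  : Prop :=
  [/\ (forall f g, bmeasC f -> bmeasC g -> tau (f \+ g) = tau f + tau g),
      (forall (c : R[i]) f, bmeasC f -> tau (fun x => c * f x) = c * tau f),
      (forall f g, bmeasC f -> bmeasC g -> tau (f \* g) = tau f * tau g),
      (exists f, bmeasC f /\ tau f != 0) &
      (forall f, FI I f -> tau f = 0)].

Definition cplx (phi : M -> R) : M -> R[i] := fun x => (phi x)%:C%C.

Definition cls (I : set (set M)) (A : set M) : set (set M) :=
  [set B | measurable B /\ I ((A `\` B) `|` (B `\` A))].

Definition Qcar (I : set (set M)) : set (set (set M)) :=
  [set c | exists A, measurable A /\ c = cls I A].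

Definition Qle (I : set (set M)) (c1 c2 : set (set M)) : Prop :=
  exists A B, [/\ measurable A, measurable B, c1 = cls I A, c2 = cls I B &
                 I (A `\` B)].

Definition Qbot (I : set (set M)) : set (set M) := cls I set0.

Definition QM (B : set (set M)) : Prop :=
  quasipoint measurable (fun A B => A `<=` B) set0 B.

Definition QA (I : set (set M)) (B : set (set (set M))) : Prop :=
  quasipoint (Qcar I) (Qle I) (Qbot I) B.

Definition QIM (I : set (set M)) (B : set (set M)) : Prop :=
  QM B /\ forall A, I A -> B (~` A).

Definition ident (I : set (set M)) (B : set (set M)) : set (set (set M)) :=
  [set c | exists A, B A /\ c = cls I A].

Definition Ephi (phi : M -> R) (l : R) : set M := [set x | phi x <= l].
Definition Eclass (I : set (set M)) (phi : M -> R) (l : R) : set (set M) :=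
  cls I (Ephi phi l).

(* the canonical map from the Gelfand spectrum of F(M,C)/F(I) to Q(A):
   tau |-> {[A] | tau(chi_A) = 1} *)
Definition kappa (I : set (set M)) (tau : (M -> R[i]) -> R[i])
  : set (set (set M)) :=
  [set c | exists A, [/\ measurable A, c = cls I A & tau \1_A = 1]].

(* the same for F(M,C) itself (I = {empty}): tau |-> {A | tau(chi_A) = 1} *)
Definition kappa0 (tau : (M -> R[i]) -> R[i]) : set (set M) :=
  [set A | measurable A /\ tau \1_A = 1].

End Setting.

From HB Require Import structures.
From mathcomp Require Import all_boot all_order all_algebra.
From mathcomp Require Import all_classical all_reals all_analysis.
From mathcomp Require Import complex lra.
Import Order.TTheory GRing.Theory Num.Theory.
Import numFieldNormedType.Exports.
Local Open Scope classical_set_scope.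
Local Open Scope ring_scope.
Set Implicit Arguments.
Unset Strict Implicit.
Unset Printing Implicit Defensive.

(* A character [tau] of the bounded measurable functions is real on real
   functions and [tau phi = inf {l | tau (\1_(phi <= l)) = 1}]. Indeed, for
   [l < tau phi] the function [phi - tau phi] agrees on [{phi <= l}] with
   [min phi l - tau phi], which is bounded away from 0, hence invertible, so
   [tau] kills the indicator of [{phi <= l}]; for [l > tau phi] the same
   argument with [max phi l] kills the indicator of the complement. A character
   vanishing on [F(I)] only sees indicators through their classes modulo [I],
   so this infimum is [f_E(kappa tau)] for [E = E^[phi]].
   Continuity on the Stone spectrum: if [l2 < f_E(Q) < l1], then [E_l1] lies in
   [Q] and, [Q] being prime, so does the complement of [E_l2]; any quasipoint
   containing both has its value of [f_E] in [[l2, l1]]. *)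

Lemma setD_subU (T : Type) (A B C : set T) : A `\` C `<=` (A `\` B) `|` (B `\` C).
Proof. by move=> x [Ax nCx]; have [Bx|nBx] := pselect (B x); [right|left]. Qed.

Lemma inf_eq_cut (R : realType) (S : set R) (r : R) :
  (forall l, l < r -> ~ S l) -> (forall l, r < l -> S l) -> inf S = r.
Proof.
move=> Slt Sgt.
have lbr : lbound S r by move=> l Sl; rewrite leNgt; apply/negP => /Slt.
have S0 : S !=set0 by exists (r + 1); apply: Sgt; rewrite ltrDl.
apply/eqP; rewrite eq_le (lb_le_inf S0 lbr) andbT leNgt; apply/negP => rS.
have /(ge_inf (ex_intro _ r lbr)) : S ((r + inf S) / 2).
  by apply: Sgt; rewrite ltr_pdivlMr // mulrDr mulr1 ltrD2l.
by apply/negP; rewrite -ltNge ltr_pdivrMr // mulrDr mulr1 ltrD2r.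
Qed.

Section BoundedMeasurable.
Context (R : realType) (d : measure_display) (M : measurableType d).
Implicit Types (f g : M -> R).

Lemma bmeasR_cst (c : R) : bmeasR (fun _ : M => c).
Proof. by split; [exact: measurable_cst|exists `|c|]. Qed.

Lemma bmeasRD f g : bmeasR f -> bmeasR g -> bmeasR (f \+ g).
Proof.
move=> [mf [k1 f_le]] [mg [k2 g_le]].
split; first exact: measurable_realfun.measurable_funD.
by exists (k1 + k2) => x; rewrite (le_trans (ler_normD _ _)) ?lerD.
Qed.

Lemma bmeasRM f g : bmeasR f -> bmeasR g -> bmeasR (f \* g).
Proof.
move=> [mf [k1 f_le]] [mg [k2 g_le]].
split; first exact: measurable_realfun.measurable_funM.
by exists (k1 * k2) => x /=; rewrite normrM ler_pM.
Qed.

Lemma bmeasR_indic (A : set M) : measurable A -> bmeasR (\1_A : M -> R).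
Proof.
move=> mA; split; first exact: measurable_realfun.measurable_indic.
by exists 1 => x; rewrite /indic; case: (x \in A); rewrite ?normr1 ?normr0.
Qed.

Lemma bmeasR_minr f (l : R) : bmeasR f -> bmeasR (fun x => Num.min (f x) l).
Proof.
move=> [mf [k f_le]]; split.
  exact: measurable_realfun.measurable_minr mf (measurable_cst l).
exists (k + `|l|) => x; rewrite minEle; case: ifP => _.
  by rewrite (le_trans (f_le x)) ?lerDl.
by rewrite lerDr (le_trans _ (f_le x)).
Qed.

Lemma bmeasR_maxr f (l : R) : bmeasR f -> bmeasR (fun x => Num.max (f x) l).
Proof.
move=> [mf [k f_le]]; split.
  exact: measurable_realfun.measurable_maxr mf (measurable_cst l).
exists (k + `|l|) => x; rewrite maxEle; case: ifP => _.
  by rewrite lerDr (le_trans _ (f_le x)).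
by rewrite (le_trans (f_le x)) ?lerDl.
Qed.

Lemma bmeasRV f (e : R) : 0 < e -> (forall x, e <= `|f x|) ->
  measurable_fun setT f -> bmeasR (fun x => (f x)^-1).
Proof.
move=> e0 f_ge mf; have f_neq0 x : f x != 0 by rewrite -normr_gt0 (lt_le_trans e0).
split.
  rewrite -[X in measurable_fun _ X]/(GRing.inv \o f).
  apply: (@measurable_comp _ _ _ _ _ _ [set r : R | r != 0]) => //.
  - by apply: measurable_realfun.open_measurable; exact: open_neq.
  - by move=> _ [x _ <-]; exact: f_neq0.
  - apply: measurable_realfun.open_continuous_measurable_fun; first exact: open_neq.
    by apply/in_setP => x /= x0; exact: inv_continuous.

exists e^-1 => x; rewrite normrV ?unitfE // lef_pV2 ?posrE ?normr_gt0 //.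
Qed.

Lemma bmeasC_cplx f : bmeasR f -> bmeasC (cplx f).
Proof. by split => //; exact: bmeasR_cst. Qed.

Lemma cplx_indic (A : set M) : cplx (\1_A : M -> R) = \1_A.
Proof. by apply/funext => x; rewrite /cplx /indic; case: (x \in A). Qed.

Lemma measurable_Ephi f (l : R) : measurable_fun setT f -> measurable (Ephi f l).
Proof.
move=> mf; rewrite -[Ephi f l]setTI.
have -> : Ephi f l = f @^-1` `]-oo, l] by apply/seteqP; split => x /=; rewrite in_itv.
by apply: mf => //; exact: measurable_itv.
Qed.

End BoundedMeasurable.

Section SigmaIdeal.
Context (d : measure_display) (M : measurableType d).
Variable I : set (set M).
Hypothesis hI : sigma_ideal I.
Implicit Types A B C : set M.

Lemma sigma_ideal_measurable A : I A -> measurable A.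
Proof. by case: hI => + _ _ _; apply. Qed.

Lemma sigma_ideal0 : I set0.
Proof. by case: hI. Qed.

Lemma sigma_ideal_sub A B : I B -> measurable A -> A `<=` B -> I A.
Proof. by case: hI => _ _ + _; apply. Qed.

Lemma sigma_ideal_subU A B C : measurable A -> A `<=` B `|` C -> I B -> I C -> I A.
Proof.
move=> mA sA IB IC; case: hI => _ _ _ Iunion.
pose F n := if n is 0%N then B else C.
have IF : I (\bigcup_n F n) by apply: Iunion => -[].
by apply: sigma_ideal_sub IF mA _ => x /sA [Bx|Cx]; [exists 0%N|exists 1%N].
Qed.

Lemma sigma_idealU A B : I A -> I B -> I (A `|` B).
Proof.
move=> IA IB; have mA := sigma_ideal_measurable IA.
have mB := sigma_ideal_measurable IB.
exact: sigma_ideal_subU (measurableU _ _ mA mB) _ IA IB.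
Qed.

Lemma sigma_ideal_setD_trans A B C : measurable A -> measurable C ->
  I (A `\` B) -> I (B `\` C) -> I (A `\` C).
Proof.
move=> mA mC IAB IBC.
exact: sigma_ideal_subU (measurableD mA mC) (@setD_subU _ A B C) IAB IBC.
Qed.

Lemma sigma_ideal_setY_setD A B : measurable A -> measurable B ->
  I (A `+` B) -> I (A `\` B).
Proof. by move=> mA mB /sigma_ideal_sub; apply; [exact: measurableD|left]. Qed.

Lemma sigma_ideal_setY_trans A B C : measurable A -> measurable B -> measurable C ->
  I (A `+` B) -> I (B `+` C) -> I (A `+` C).
Proof.
move=> mA mB mC IAB IBC.
have IBA : I (B `+` A) by rewrite setYC.
have ICB : I (C `+` B) by rewrite setYC.
apply: sigma_idealU.
- exact: (sigma_ideal_setD_trans mA mC (sigma_ideal_setY_setD mA mB IAB)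
          (sigma_ideal_setY_setD mB mC IBC)).
- exact: (sigma_ideal_setD_trans mC mA (sigma_ideal_setY_setD mC mB ICB)
          (sigma_ideal_setY_setD mB mA IBA)).
Qed.

Lemma cls_self A : measurable A -> cls I A A.
Proof. by move=> mA; split; rewrite // -/(A `+` A) setYK; exact: sigma_ideal0. Qed.

Lemma cls_eqP A B : measurable A -> measurable B ->
  cls I A = cls I B <-> I (A `+` B).
Proof.
move=> mA mB; split=> [clsAB|IAB].
  have [_ IBA] : cls I B A by rewrite -clsAB; exact: cls_self.
  by rewrite setYC.
apply/seteqP; split=> C [mC IC]; split => //.
  by apply: sigma_ideal_setY_trans IC; rewrite // setYC.
exact: sigma_ideal_setY_trans IAB IC.
Qed.

Lemma Qle_clsP A B : measurable A -> measurable B ->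
  Qle I (cls I A) (cls I B) <-> I (A `\` B).
Proof.
move=> mA mB; split=> [[A' [B' [mA' mB' clsA clsB IAB']]]|IAB]; last first.
  by exists A, B.
have IAA' := sigma_ideal_setY_setD mA mA' ((cls_eqP mA mA').1 clsA).
have IB'B := sigma_ideal_setY_setD mB' mB ((cls_eqP mB' mB).1 (esym clsB)).
exact: sigma_ideal_setD_trans mA mB IAA' (sigma_ideal_setD_trans mA' mB IAB' IB'B).
Qed.

Lemma Qle_cls_sub A B : measurable A -> measurable B -> A `<=` B ->
  Qle I (cls I A) (cls I B).
Proof.
move=> mA mB; rewrite -setD_eq0 => AB0; apply/Qle_clsP => //.
by rewrite AB0; exact: sigma_ideal0.
Qed.

Lemma Qle_cls_trans A B C : measurable A -> measurable B -> measurable C ->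
  Qle I (cls I A) (cls I B) -> Qle I (cls I B) (cls I C) -> Qle I (cls I A) (cls I C).
Proof.
move=> mA mB mC /(Qle_clsP mA mB) IAB /(Qle_clsP mB mC) IBC.
by apply/Qle_clsP => //; exact: sigma_ideal_setD_trans IAB IBC.
Qed.

Lemma is_meet_cls A B : measurable A -> measurable B ->
  is_meet (Qcar I) (Qle I) (cls I A) (cls I B) (cls I (A `&` B)).
Proof.
move=> mA mB; have mAB := measurableI _ _ mA mB.
split; [by exists (A `&` B)|exact: Qle_cls_sub|exact: Qle_cls_sub|].
move=> _ [C [mC ->]] /(Qle_clsP mC mA) ICA /(Qle_clsP mC mB) ICB.
apply/Qle_clsP => //; rewrite setDIr.
exact: sigma_idealU.
Qed.

End SigmaIdeal.

Section QuotientQuasipoint.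
Context (d : measure_display) (M : measurableType d).
Variable I : set (set M).
Hypothesis hI : sigma_ideal I.
Variable Q : set (set (set M)).
Hypothesis hQ : QA I Q.
Implicit Types A C : set M.

(* The representatives of the classes in [Q]: the inverse of [ident]. *)
Definition qp_lift A := measurable A /\ Q (cls I A).

Lemma QA_cls c : Q c -> exists2 A, measurable A & c = cls I A.
Proof. by case: hQ => -[+ _ _ _ _] _ => /[apply] -[A []]; exists A. Qed.

Lemma qp_lift_setD A C : qp_lift A -> measurable C -> I (A `\` C) -> qp_lift C.
Proof.
case: hQ => -[_ _ Qup _ _] _ [mA QA] mC IAC; split => //.
by apply: Qup QA _ _; [exists C|exact/Qle_clsP].
Qed.

Lemma qp_lift_sub A C : qp_lift A -> measurable C -> A `<=` C -> qp_lift C.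
Proof.
move=> QA mC; rewrite -setD_eq0 => AC0; apply: qp_lift_setD QA mC _.
by rewrite AC0; exact: sigma_ideal0.
Qed.

Lemma qp_lift_setI A C : qp_lift A -> qp_lift C -> qp_lift (A `&` C).
Proof.
case: hQ => -[_ _ _ _ Qmeet] _ [mA QA] [mC QC]; split; first exact: measurableI.
by apply: Qmeet QA QC _; exact: is_meet_cls.
Qed.

Lemma qp_lift_notI A : qp_lift A -> ~ I A.
Proof.
case: hQ => -[_ _ _ Qbot0 _] _ [mA QA] IA; apply: Qbot0.
suff <- : cls I A = Qbot I by [].
by apply/(cls_eqP hI mA measurable0); rewrite setY0.
Qed.

Lemma qp_lift_setT : qp_lift setT.
Proof.
case: hQ => -[_ [c Qc] _ _ _] _; have [A mA cE] := QA_cls Qc.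
by apply: (@qp_lift_sub A) => //; rewrite /qp_lift -cE.
Qed.

(* The dual ideal generated by [Q] and [cls I A]: when it is proper, maximality
   of [Q] forces [cls I A] into [Q], so quasipoints are prime. *)
Definition qp_adjoin A :=
  [set c | Qcar I c /\ exists2 Y, qp_lift Y & Qle I (cls I (Y `&` A)) c].

Lemma qp_adjoin_sub A : measurable A -> Q `<=` qp_adjoin A.
Proof.
move=> mA c Qc; have [Y mY cE] := QA_cls Qc; split; first by exists Y.
exists Y; first by rewrite /qp_lift -cE.
by rewrite cE; apply: (Qle_cls_sub hI (measurableI _ _ mY mA) mY) => ? [].
Qed.

Lemma qp_adjoin_dual_ideal A : measurable A -> ~ qp_lift (~` A) ->
  dual_ideal (Qcar I) (Qle I) (Qbot I) (qp_adjoin A).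
Proof.
move=> mA nQAC; have mYA Y : qp_lift Y -> measurable (Y `&` A).
  by case=> mY _; exact: measurableI.
split.
- by move=> c [].
- exists (cls I A); split; first by exists A.
  exists setT; first exact: qp_lift_setT.
  by rewrite setTI; apply: Qle_cls_sub.
- move=> _ _ [[X [mX ->]] [Y QY YX]] [Z [mZ ->]] XZ; split; first by exists Z.
  by exists Y => //; exact: (Qle_cls_trans hI (mYA _ QY) mX mZ YX XZ).
- move=> [_ [Y QY /(Qle_clsP hI (mYA _ QY) measurable0)]]; rewrite setD0 => IYA.
  apply: nQAC; apply: qp_lift_setD QY (measurableC mA) _.
  by rewrite setDE setCK.
- move=> _ _ c [[X1 [mX1 ->]] [Y1 QY1 Y1X1]] [[X2 [mX2 ->]] [Y2 QY2 Y2X2]].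
  move=> [Qc _ _ glb]; split => //.
  have QY : qp_lift (Y1 `&` Y2) by exact: qp_lift_setI.
  exists (Y1 `&` Y2) => //; apply: glb.
  + by exists (Y1 `&` Y2 `&` A); split => //; exact: mYA.
  + apply: (Qle_cls_trans hI (mYA _ QY) (mYA _ QY1) mX1 _ Y1X1).
    by apply: (Qle_cls_sub hI (mYA _ QY) (mYA _ QY1)) => ? [[]].
  + apply: (Qle_cls_trans hI (mYA _ QY) (mYA _ QY2) mX2 _ Y2X2).
    by apply: (Qle_cls_sub hI (mYA _ QY) (mYA _ QY2)) => ? [[]].
Qed.

Lemma qp_lift_setC A : measurable A -> ~ qp_lift A -> qp_lift (~` A).
Proof.
move=> mA nQA; apply: contrapT => nQAC; apply: nQA; split => //.
case: hQ => _ /(_ _ (qp_adjoin_dual_ideal mA nQAC) (qp_adjoin_sub mA)) <-.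
split; first by exists A.
exists setT; first exact: qp_lift_setT.
by rewrite setTI; apply: Qle_cls_sub.
Qed.

End QuotientQuasipoint.

Section Character.
Context (R : realType) (d : measure_display) (M : measurableType d).
Variables (I : set (set M)) (tau : (M -> R[i]) -> R[i]).
Hypothesis htau : quotient_character I tau.
Implicit Types (f g phi : M -> R).

Local Notation T f := (tau (cplx f)).

Lemma characterRD f g : bmeasR f -> bmeasR g -> T (f \+ g) = T f + T g.
Proof.
move=> bf bg; have [tauD _ _ _ _] := htau.
rewrite -tauD; try exact: bmeasC_cplx.
by congr tau; apply/funext => x; rewrite /cplx /= rmorphD.
Qed.

Lemma characterRM f g : bmeasR f -> bmeasR g -> T (f \* g) = T f * T g.
Proof.
move=> bf bg; have [_ _ tauM _ _] := htau.
rewrite -tauM; try exact: bmeasC_cplx.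
by congr tau; apply/funext => x; rewrite /cplx /= rmorphM.
Qed.

Lemma character1 : T (fun _ => 1) = 1.
Proof.
have [_ _ tauM [f [bf tauf_neq0]] _] := htau.
have : tau f * T (fun _ => 1) = tau f * 1.
  rewrite -tauM ?mulr1 //; last exact/bmeasC_cplx/bmeasR_cst.
  by congr tau; apply/funext => x; rewrite /cplx /= rmorph1 mulr1.
by move/(mulfI tauf_neq0).
Qed.

Lemma character_cst c : T (fun _ => c) = c%:C%C.
Proof.
have [_ tauZ _ _ _] := htau.
have -> : cplx (fun _ : M => c) = (fun x => c%:C%C * cplx (fun _ => 1) x).
  by apply/funext => x; rewrite /cplx rmorph1 mulr1.
by rewrite tauZ ?character1 ?mulr1 //; exact/bmeasC_cplx/bmeasR_cst.
Qed.

Lemma character_neq0 g (e : R) : 0 < e -> (forall x, e <= `|g x|) -> bmeasR g ->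
  T g != 0.
Proof.
move=> e0 g_ge bg; have bgV := bmeasRV e0 g_ge bg.1.
have : T (g \* (fun x => (g x)^-1)) = 1.
  rewrite -character1; congr tau; apply/funext => x; rewrite /cplx /= mulfV //.
  by rewrite -normr_gt0 (lt_le_trans e0).
rewrite characterRM // => /(congr1 (fun z => z == 0)).
by rewrite oner_eq0 mulf_eq0 => /norP[].
Qed.

(* If [tau phi = a + ib] with [b != 0], then [(phi - a)^2 + b^2] is invertible
   but [tau] maps it to [(ib)^2 + b^2 = 0]. *)
Lemma character_real phi : bmeasR phi -> T phi = (complex.Re (T phi))%:C%C.
Proof.
move=> bphi; case lamE : (T phi) => [a b] /=; suff -> : b = 0 by [].
apply/eqP; apply: contraT => b_neq0.
have bpa : bmeasR (phi \+ (fun _ => - a)) by apply: bmeasRD => //; exact: bmeasR_cst.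
pose g := (phi \+ (fun _ => - a)) \* (phi \+ (fun _ => - a)) \+ (fun _ => b ^+ 2).
have bg : bmeasR g by apply: bmeasRD; [exact: bmeasRM|exact: bmeasR_cst].
have b2_gt0 : 0 < b ^+ 2 by rewrite exprn_even_gt0.
have : T g != 0.
  apply: (character_neq0 b2_gt0) => // x; rewrite /g /= -expr2 ger0_norm.
    by rewrite lerDr sqr_ge0.
  by rewrite addr_ge0 // ?(ltW b2_gt0) // sqr_ge0.
rewrite /g characterRD ?characterRM ?characterRD ?character_cst //;
  try exact: bmeasR_cst; last exact: bmeasRM.
by rewrite lamE; simpc; rewrite addNr eqxx.
Qed.

Lemma character_centered phi : bmeasR phi ->
  T (phi \+ (fun _ => - complex.Re (T phi))) = 0.
Proof.
move=> bphi; rewrite characterRD ?character_cst; last 2 first.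
- exact: bphi.
- exact: bmeasR_cst.
by rewrite {1}character_real // rmorphN subrr.
Qed.

Lemma character_Ephi_lt phi l : bmeasR phi -> l < complex.Re (T phi) ->
  tau \1_(Ephi phi l) = 0.
Proof.
move=> bphi; set a := complex.Re (T phi) => la.
have mE := measurable_Ephi l bphi.1.
have bE := bmeasR_indic R mE.
pose g x := Num.min (phi x) l - a.
have bg : bmeasR g by apply: bmeasRD; [exact: bmeasR_minr|exact: bmeasR_cst].
have Tg_neq0 : T g != 0.
  apply: (@character_neq0 g (a - l)) => //; first by rewrite subr_gt0.
  move=> x; rewrite /g ler0_norm; last by rewrite subr_le0 ge_min (ltW la) orbT.
  by rewrite opprB lerD2l lerN2 ge_min lexx orbT.
have Ephi_g : (\1_(Ephi phi l) : M -> R) \* g =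
    (\1_(Ephi phi l) : M -> R) \* (phi \+ (fun _ => - a)).
  apply/funext => x /=; rewrite /indic; case: (boolP (x \in _)) => [|_].
    by rewrite inE /g => /min_l ->.
  by rewrite !mul0r.
have /eqP := congr1 (fun h => T h) Ephi_g.
rewrite !characterRM ?character_centered // ?mulr0 ?mulf_eq0 ?(negbTE Tg_neq0) ?orbF.
  by rewrite cplx_indic => /eqP.
by apply: bmeasRD => //; exact: bmeasR_cst.
Qed.

Lemma character_Ephi_gt phi l : bmeasR phi -> complex.Re (T phi) < l ->
  tau \1_(Ephi phi l) = 1.
Proof.
move=> bphi; set a := complex.Re (T phi) => al.
have mE := measurable_Ephi l bphi.1.
have bE := bmeasR_indic R mE; have bEc := bmeasR_indic R (measurableC mE).
pose g x := Num.max (phi x) l - a.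
have bg : bmeasR g by apply: bmeasRD; [exact: bmeasR_maxr|exact: bmeasR_cst].
have Tg_neq0 : T g != 0.
  apply: (@character_neq0 g (l - a)) => //; first by rewrite subr_gt0.
  move=> x; rewrite /g ger0_norm; last by rewrite subr_ge0 le_max (ltW al) orbT.
  by rewrite lerD2r le_max lexx orbT.
have Ephic_g : (\1_(~` Ephi phi l) : M -> R) \* g =
    (\1_(~` Ephi phi l) : M -> R) \* (phi \+ (fun _ => - a)).
  apply/funext => x /=; rewrite /indic; case: (boolP (x \in _)) => [|_].
    by rewrite inE /Ephi /= => /negP; rewrite -ltNge /g => /ltW /max_l ->.
  by rewrite !mul0r.
have Ephi_Ephic : (\1_(Ephi phi l) : M -> R) \+ \1_(~` Ephi phi l) = fun _ => 1.
  apply/funext => x /=; rewrite /indic in_setC.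
  by case: (x \in _); rewrite ?addr0 ?add0r.
have /eqP := congr1 (fun h => T h) Ephic_g.
rewrite !characterRM ?character_centered // ?mulr0 ?mulf_eq0 ?(negbTE Tg_neq0) ?orbF.
  have := congr1 (fun h => T h) Ephi_Ephic; rewrite characterRD // character1.
  by rewrite !cplx_indic => + /eqP Ec0; rewrite Ec0 addr0.
by apply: bmeasRD => //; exact: bmeasR_cst.
Qed.

Lemma characterE phi : bmeasR phi ->
  T phi = (inf [set l | tau \1_(Ephi phi l) = 1])%:C%C.
Proof.
move=> bphi; rewrite {1}character_real //; congr (_%:C)%C; apply/esym/inf_eq_cut.
  by move=> l /(character_Ephi_lt bphi) /= -> /eqP; rewrite eq_sym oner_eq0.
by move=> l /(character_Ephi_gt bphi).
Qed.

Lemma character_indic_cls (hI : sigma_ideal I) A B : measurable A -> measurable B ->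
  cls I A = cls I B -> tau \1_A = tau \1_B.
Proof.
move=> mA mB /(cls_eqP hI mA mB) IAB; have [tauD _ _ _ tauFI] := htau.
pose g := (\1_A : M -> R) \+ (fun _ => -1) \* (\1_B : M -> R).
have bg : bmeasR g.
  by apply: bmeasRD; [|apply: bmeasRM; [exact: bmeasR_cst|]]; exact: bmeasR_indic.
have FIg : FI I (cplx g).
  split; first exact: bmeasC_cplx.
  exists (A `+` B); split => // x nABx.
  have AB : (x \in A) = (x \in B).
    apply/idP/idP => /set_mem x_in; apply/mem_set; apply: contrapT => x_notin.
      by apply: nABx; left.
    by apply: nABx; right.
  by rewrite /cplx /g /indic /= AB mulN1r subrr.
have -> : \1_A = cplx (\1_B) \+ cplx g.
  rewrite -cplx_indic; apply/funext => x.
  by rewrite /cplx /= -rmorphD /g /= mulN1r addrC subrK.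
rewrite tauD ?(tauFI _ FIg) ?addr0 ?cplx_indic //; last exact: bmeasC_cplx.
by rewrite -cplx_indic; apply: bmeasC_cplx; exact: bmeasR_indic.
Qed.

End Character.

Section StoneContinuity.
Context (R : realType) (d : measure_display) (M : measurableType d).
Variable I : set (set M).
Hypothesis hI : sigma_ideal I.
Variable phi : M -> R.
Hypothesis bphi : bmeasR phi.

Definition levels (Q : set (set (set M))) := [set l : R | Q (Eclass I phi l)].

Section AtQuasipoint.
Variable Q : set (set (set M)).
Hypothesis hQ : QA I Q.

Local Notation f := (fE (Eclass I phi) Q).

Lemma levelsP l : levels Q l <-> qp_lift I Q (Ephi phi l).
Proof. by split=> [Ql|[]//]; split=> //; exact: measurable_Ephi bphi.1. Qed.

Lemma levels_ge l l' : levels Q l -> l <= l' -> levels Q l'.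
Proof.
move=> /levelsP Ql ll'; apply/levelsP.
by apply: (qp_lift_sub hI hQ Ql (measurable_Ephi _ bphi.1)) => x /le_trans; apply.
Qed.

Lemma levels_neq0 : levels Q !=set0.
Proof.
have [_ [k phi_le]] := bphi; exists k; apply/levelsP.
apply: (qp_lift_sub hI hQ (qp_lift_setT hI hQ) (measurable_Ephi _ bphi.1)) => x _.
exact: le_trans (ler_norm _) (phi_le x).
Qed.

Lemma levels_has_lbound : has_lbound (levels Q).
Proof.
have [_ [k phi_le]] := bphi; exists (- k) => l /levelsP Ql; rewrite leNgt.
apply/negP => lk; apply: (qp_lift_notI hI hQ Ql).
apply: (sigma_ideal_sub hI (sigma_ideal0 hI) (measurable_Ephi _ bphi.1)) => x.
rewrite /Ephi /= => phil.
by move: (phi_le x); rewrite ler_norml => /andP[? _]; lra.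
Qed.

Lemma fE_le l : levels Q l -> f <= l.
Proof. exact: (ge_inf levels_has_lbound). Qed.

Lemma levels_gt_fE l : f < l -> levels Q l.
Proof. by move=> /(inf_lt levels_neq0) [l' Ql' /ltW]; exact: levels_ge. Qed.

Lemma fE_ge l : qp_lift I Q (~` Ephi phi l) -> l <= f.
Proof.
move=> QC; apply: lb_le_inf levels_neq0 _ => l' Ql'; rewrite leNgt; apply/negP => l'l.
have /levelsP Ql := levels_ge Ql' (ltW l'l).
apply: (qp_lift_notI hI hQ (qp_lift_setI hI hQ Ql QC)).
by rewrite setICr; exact: sigma_ideal0.
Qed.

Lemma qp_lift_Ephi_lt l : l < f -> qp_lift I Q (~` Ephi phi l).
Proof.
move=> lf; apply: (qp_lift_setC hI hQ (measurable_Ephi _ bphi.1)) => /levelsP /fE_le.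
by rewrite leNgt lf.
Qed.

End AtQuasipoint.

Lemma stone_continuous_fE :
  stone_continuous (Qcar I) (Qle I) (Qbot I) (fE (Eclass I phi)).
Proof.
move=> V oV; split=> [B []//|Q [hQ VQ]].
have /nbhs_ballP [e /= e0 ballV] : nbhs (fE (Eclass I phi) Q) V.
  by move: oV; rewrite openE; exact.
set l1 := fE (Eclass I phi) Q + e / 2; set l2 := fE (Eclass I phi) Q - e / 2.
exists 2%N, (fun i => if i == 0%N then Eclass I phi l1 else cls I (~` Ephi phi l2)).
split=> [[|[|]]//= _|Q' hQ' Q'_basic].
- by apply: levels_gt_fE; rewrite // /l1 ltrDl divr_gt0.
- by case: (qp_lift_Ephi_lt hQ (_ : l2 < _)); rewrite // /l2 gtrDl oppr_lt0 divr_gt0.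
split=> //; apply: ballV.
have le1 := fE_le hQ' (Q'_basic 0%N erefl).
have le2 : l2 <= fE (Eclass I phi) Q'.
  apply: fE_ge => //; split; last exact: Q'_basic 1%N _.
  exact/measurableC/measurable_Ephi/bphi.1.
rewrite -ball_normE /ball_ /= ltr_norml /l1 /l2 in le1 le2 *.
by apply/andP; split; lra.
Qed.

End StoneContinuity.

Lemma is_meet_setI (d : measure_display) (M : measurableType d) (A B : set M) :
  measurable A -> measurable B ->
  is_meet measurable (fun A B => A `<=` B) A B (A `&` B).
Proof.
move=> mA mB; split; [exact: measurableI|by move=> x []|by move=> x []|].
by move=> C _ CA CB x Cx; split; [exact: CA|exact: CB].
Qed.

Lemma ident_cls (d : measure_display) (M : measurableType d) (I : set (set M))
    (B : set (set M)) (A : set M) :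
  sigma_ideal I -> QIM I B -> measurable A -> ident I B (cls I A) <-> B A.
Proof.
move=> hI [[[Bmeas _ Bup _ Bmeet] _] BIc] mA.
split=> [[A' [BA' clsAA']]|BA]; last by exists A.
have mA' := Bmeas _ BA'.
have IA'A : I (A' `+` A) by apply/(cls_eqP hI mA' mA).
have mC : measurable (~` (A' `+` A)).
  exact: measurableC (sigma_ideal_measurable hI IA'A).
apply: Bup (Bmeet _ _ _ BA' (BIc _ IA'A) (is_meet_setI mA' mC)) mA _.
by move=> x [A'x]; have [//|nAx] := pselect (A x); case; left.
Qed.

Lemma kappa_cls (R : realType) (d : measure_display) (M : measurableType d)
    (I : set (set M)) (tau : (M -> R[i]) -> R[i]) (A : set M) :
  sigma_ideal I -> quotient_character I tau -> measurable A ->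
  kappa I tau (cls I A) <-> tau \1_A = 1.
Proof.
move=> hI htau mA; split=> [[A' [mA' clsAA' <-]]|]; last by exists A.
exact: (character_indic_cls htau hI mA mA' clsAA').
Qed.

Theorem theorem2p14 (R : realType) (d : measure_display) (M : measurableType d)
  (I : set (set M)) (hI : sigma_ideal I) :
  (* Gamma[phi] = f_{E^[phi]} is a continuous function on Q(A), and it is
     the Gelfand transform of [phi] under the canonical identification *)
  (forall phi : M -> R, bmeasR phi ->
     stone_continuous (Qcar I) (Qle I) (Qbot I) (fE (Eclass I phi)) /\
     (forall tau, quotient_character I tau ->
        tau (cplx phi) = ((fE (Eclass I phi) (kappa I tau))%:C)%C)) /\
  (* f_{E^[phi]} = f_{E^phi} restricted to Q^I(A(M)) *)
  (forall phi : M -> R, bmeasR phi ->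
     forall B, QIM I B -> fE (Eclass I phi) (ident I B) = fE (Ephi phi) B) /\
  (* phi |-> f_{E^phi} is the Gelfand transformation on F(M,R) *)
  (forall phi : M -> R, bmeasR phi ->
     forall tau, quotient_character (@set0 (set M)) tau ->
        tau (cplx phi) = ((fE (Ephi phi) (kappa0 tau))%:C)%C).
Proof.
split; [|split] => phi bphi; have mE l := measurable_Ephi l bphi.1.
- split=> [|tau htau]; first exact: stone_continuous_fE.
  rewrite (characterE htau bphi); congr (inf _)%:C%C; apply: eq_set => l.
  by apply/propext; split=> /(kappa_cls hI htau (mE l)).
- move=> B QB; congr inf; apply: eq_set => l.
  by apply/propext; exact: (ident_cls hI QB (mE l)).
- move=> tau htau; rewrite (characterE htau bphi); congr (inf _)%:C%C.
  by apply: eq_set => l; apply/propext; split=> [|[]//]; split.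
Qed.
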